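(* Let $c^0\in\mathcal{C}$ and $s^0\in\mathcal{S}$ be an incompatible pair, $(c^0,s^0)\notin\mathcal{E}$. Then there exist an integer $h$ with $1\le h\le\min\{I,J\}-1$ and types $c^1,\ldots,c^h\in\mathcal{C}$, $s^1,\ldots,s^h\in\mathcal{S}$ with $(c^i,s^i)\in\mathcal{E}$ for $i=1,\ldots,h$, such that the FCFS matching of the customer sequence $(c^0,c^1,\ldots,c^h)$ with the server sequence $(s^0,s^1,\ldots,s^h)$ is perfect.
   Context: Let $\mathcal{C}=\{c_1,\ldots,c_I\}$ (customer types) and $\mathcal{S}=\{s_1,\ldots,s_J\}$ (server types) be finite sets and $G=(\mathcal{C},\mathcal{S},\mathcal{E})$, $\mathcal{E}\subseteq\mathcal{C}\times\mathcal{S}$, a connected bipartite compatibility graph. Given finite ordered sequences of customer types and server types indexed by the same set, the FCFS matching is the unique complete FCFS matching: a set $A$ of index pairs $(m,n)$ with $(c^m,s^n)\in\mathcal{E}$, each index in at most one pair, with no unmatched compatible pair left, and such that for every $(m,n)\in A$ every $l<n$ with $(c^m,s^l)\in\mathcal{E}$ is matched to some $k<m$ and every $k<m$ with $(c^k,s^n)\in\mathcal{E}$ is matched to some $l<n$. It is perfect if every index is matched. *)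

From mathcomp Require Import all_boot.
Set Implicit Arguments. Unset Strict Implicit. Unset Printing Implicit Defensive.

Definition bip_rel (C S : finType) (E : C -> S -> bool) : rel (C + S)%type :=
  fun x y => match x, y with
             | inl c, inr s => E c s
             | inr s, inl c => E c s
             | _, _ => false
             end.

Definition bip_connected (C S : finType) (E : C -> S -> bool) : Prop :=
  forall x y : (C + S)%type, connect (bip_rel E) x y.

Definition fcfs_matching (C S : finType) (E : C -> S -> bool) (n : nat)
  (cs : 'I_n -> C) (ss : 'I_n -> S) (A : {set 'I_n * 'I_n}) : Prop :=
  [/\ (forall p, p \in A -> E (cs p.1) (ss p.2)),
      (forall p q, p \in A -> q \in A -> p.1 = q.1 -> p = q),
      (forall p q, p \in A -> q \in A -> p.2 = q.2 -> p = q),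
      (forall m k : 'I_n, E (cs m) (ss k) ->
         (exists l : 'I_n, (m, l) \in A) \/ (exists l : 'I_n, (l, k) \in A))
    &
      (forall m k : 'I_n, (m, k) \in A ->
         (forall l : 'I_n, l < k -> E (cs m) (ss l) -> exists2 j : 'I_n, j < m & (j, l) \in A) /\
         (forall j : 'I_n, j < m -> E (cs j) (ss k) -> exists2 l : 'I_n, l < k & (j, l) \in A))].

Definition perfect_matching (n : nat) (A : {set 'I_n * 'I_n}) : Prop :=
  (forall m : 'I_n, exists k : 'I_n, (m, k) \in A) /\ (forall k : 'I_n, exists m : 'I_n, (m, k) \in A).

From mathcomp Require Import all_boot zify.
Set Implicit Arguments. Unset Strict Implicit. Unset Printing Implicit Defensive.

(* A shortest path c0 = c^0 - s'^0 - c^1 - s'^1 - ... - c^h - s'^h = s0 in the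
   compatibility graph has no chords, so c^i is compatible exactly with s'^(i-1)
   and s'^i.  Listing the customers in path order and the servers with s0 moved
   to the front gives a staircase pattern in which customer i must be matched
   with the server following it on the path: by induction on i, every server
   that customer i could take instead is already taken by customer i - 1. *)

Section Staircase.

Variables (C S : finType) (E : C -> S -> bool) (n : nat).
Variables (cs : 'I_n -> C) (ss : 'I_n -> S) (sigma : 'I_n -> 'I_n).
Hypothesis sigma_bij : bijective sigma.
Hypothesis E_staircase :
  forall i j, E (cs i) (ss j) = (sigma j == i :> nat) || ((sigma j).+1 == i).

Let sigma_inj : injective sigma := bij_inj sigma_bij.

Let sigma_onto i : exists j, sigma j = i.
Proof. by have [tau _ tauK] := sigma_bij; exists (tau i). Qed.

Definition staircase_matching : {set 'I_n * 'I_n} := [set p | sigma p.2 == p.1].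

Lemma staircase_fcfs : fcfs_matching E cs ss staircase_matching.
Proof.
split.
- by move=> [i j]; rewrite inE E_staircase /= => /eqP ->; rewrite eqxx.
- move=> [i j] [i' j']; rewrite !inE /= => /eqP <- /eqP <- Hj.
  by rewrite (sigma_inj Hj).
- by move=> [i j] [i' j']; rewrite !inE /= => /eqP <- /eqP <- ->.
- by move=> m k _; left; have [j Hj] := sigma_onto m; exists j; rewrite inE Hj.
move=> m k; rewrite inE /= => /eqP Hk; split.
- move=> l Hlk; rewrite E_staircase => /orP [/eqP Hl | /eqP Hl].
    have Hkl : k = l by apply: sigma_inj; apply: val_inj; rewrite Hk.
    by rewrite Hkl ltnn in Hlk.
  by exists (sigma l); [rewrite -Hl | rewrite inE].
- by move=> j Hjm; rewrite E_staircase Hk => /orP [] /eqP; lia.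
Qed.

Lemma staircase_fcfs_contains A :
  fcfs_matching E cs ss A -> forall l, (sigma l, l) \in A.
Proof.
case=> A_E _ A_server A_complete A_fcfs.
suff: forall k l, sigma l = k :> nat -> (sigma l, l) \in A by move=> H l; apply: H.
elim/ltn_ind=> k IH l Hl.
have only_l l' : (sigma l, l') \in A -> l' = l.
  move=> Hll'; move: (A_E _ Hll'); rewrite E_staircase /= => /orP [] /eqP H.
    by apply: sigma_inj; apply: val_inj.
  have Hl' := IH (sigma l') ltac:(rewrite -Hl -H //) l' erefl.
  by move: (A_server _ _ Hl' Hll' erefl) => /(congr1 (fun p => val p.1)) /=; lia.
have E_l : E (cs (sigma l)) (ss l) by rewrite E_staircase eqxx.
case: (A_complete _ _ E_l) => [[l' Hl'] | [j Hj]]; first by have := Hl'; rewrite (only_l _ Hl').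
move: (A_E _ Hj); rewrite E_staircase /= => /orP [] /eqP Hjl.
  by have <- : j = sigma l by apply: val_inj.
have [_ served_before] := A_fcfs _ _ Hj.
have [l' Hl'l Hll'] := served_before (sigma l) ltac:(lia) E_l.
by rewrite (only_l _ Hll') ltnn in Hl'l.
Qed.

Lemma staircase_fcfs_perfect A : fcfs_matching E cs ss A -> perfect_matching A.
Proof.
move=> /staircase_fcfs_contains A_sigma; split=> [m | k]; last by exists (sigma k).
by have [j <-] := sigma_onto m; exists j.
Qed.

Lemma staircase_customers_inj : injective cs.
Proof.
move=> a b Hab; apply/ord_inj.
have [ja Ha] := sigma_onto a; have [jb Hb] := sigma_onto b.
have : E (cs b) (ss ja) by rewrite -Hab E_staircase Ha eqxx.
have : E (cs a) (ss jb) by rewrite Hab E_staircase Hb eqxx.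
rewrite !E_staircase Ha Hb => /orP [] /eqP H1 /orP [] /eqP H2; lia.
Qed.

Lemma staircase_servers_inj : injective ss.
Proof.
move=> a b Hab; apply/sigma_inj/ord_inj.
have : E (cs (sigma a)) (ss b) by rewrite -Hab E_staircase eqxx.
have : E (cs (sigma b)) (ss a) by rewrite Hab E_staircase eqxx.
rewrite !E_staircase => /orP [] /eqP H1 /orP [] /eqP H2; lia.
Qed.

End Staircase.

Lemma unit_steps_countdown (f : nat -> nat) (D : nat) :
  f 0 = D -> f D = 0 -> (forall i, i < D -> f i <= (f i.+1).+1) ->
  forall i, i <= D -> f i = D - i.
Proof.
move=> f0 fD f_step.
have lower i : i <= D -> D <= i + f i.
  elim: i => [|i IH] Hi; first by rewrite f0.
  by have := IH (ltnW Hi); have := f_step i Hi; lia.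
have upper k : k <= D -> f (D - k) <= k.
  elim: k => [|k IH] Hk; first by rewrite subn0 fD.
  have := f_step (D - k.+1) ltac:(lia).
  have -> : (D - k.+1).+1 = D - k by lia.
  by have := IH (ltnW Hk); lia.
by move=> i Hi; have := lower i Hi; have := upper (D - i) (leq_subr _ _); rewrite subKn //; lia.
Qed.

Section ShortestWalk.

Variables (T : finType) (e : rel T) (y : T).

Definition walks_to (k : nat) (v : T) : bool :=
  [exists p : k.-tuple T, path e v p && (last v p == y)].

Hypothesis reachable : forall v, exists k, walks_to k v.

Definition dist (v : T) : nat := ex_minn (reachable v).

Lemma walks_to_dist v : walks_to (dist v) v.
Proof. by rewrite /dist; case: ex_minnP. Qed.

Lemma dist_min k v : walks_to k v -> dist v <= k.
Proof. by rewrite /dist; case: ex_minnP => m _; apply. Qed.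

Lemma dist_target : dist y = 0.
Proof. by apply/eqP; rewrite -leqn0; apply: dist_min; apply/existsP; exists [tuple]; rewrite /=. Qed.

Lemma dist_edge u v : e u v -> dist u <= (dist v).+1.
Proof.
move=> euv; apply: dist_min.
have /existsP [p /andP [Hp Hl]] := walks_to_dist v.
by apply/existsP; exists (cons_tuple v p); rewrite /= euv Hp.
Qed.

Lemma shortest_walk x : exists w : nat -> T,
  [/\ w 0 = x, w (dist x) = y,
      forall i, i < dist x -> e (w i) (w i.+1)
    & forall i j, i <= dist x -> j <= dist x -> e (w i) (w j) -> j <= i.+1].
Proof.
have /existsP [p /andP [/(pathP y) Hp /eqP Hl]] := walks_to_dist x.
set D := dist x in p Hp Hl *; rewrite size_tuple in Hp.
pose w i := nth y (x :: p) i.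
have w_edge i : i < D -> e (w i) (w i.+1) by apply: Hp.
have w_last : w D = y by rewrite -Hl; have := nth_last y (x :: p); rewrite /= size_tuple.
have w_dist : forall i, i <= D -> dist (w i) = D - i.
  apply: (unit_steps_countdown (f := dist \o w)) => [//||i /w_edge/dist_edge //].
  by rewrite /= w_last dist_target.
exists w; split => // i j Hi Hj /dist_edge.
by rewrite !w_dist //; lia.
Qed.

End ShortestWalk.

Section Bipartite.

Variables (C S : finType) (E : C -> S -> bool).

Lemma bip_rel_sym : symmetric (bip_rel E).
Proof. by case=> ? []. Qed.

Definition is_customer (v : C + S) : bool := if v is inl _ then true else false.

Lemma bip_walk_parity (w : nat -> C + S) (D : nat) :
  is_customer (w 0) -> (forall i, i < D -> bip_rel E (w i) (w i.+1)) ->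
  forall i, i <= D -> is_customer (w i) = ~~ odd i.
Proof.
move=> w0 w_edge; elim=> [|i IH] Hi //=.
by rewrite -IH ?(ltnW Hi) //; move: (w_edge i Hi); case: (w i) => ?; case: (w i.+1).
Qed.

Lemma chordless_path : bip_connected E -> forall c0 s0, ~~ E c0 s0 ->
  exists h (cw : nat -> C) (sw : nat -> S),
    [/\ 0 < h, cw 0 = c0, sw h = s0
      & forall i j, i <= h -> j <= h -> E (cw i) (sw j) = (j == i) || (j.+1 == i)].
Proof.
move=> E_conn c0 s0 E_c0s0.
have reachable v : exists k, walks_to (bip_rel E) (inr s0) k v.
  have /connectP [p Hp Hl] := E_conn v (inr s0).
  by exists (size p); apply/existsP; exists (in_tuple p); rewrite /= Hp -Hl eqxx.
have [w [w0 wD w_edge w_chord]] := shortest_walk reachable (inl c0).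
set D := dist reachable (inl c0) in wD w_edge w_chord.
have w_parity := bip_walk_parity (w := w) (D := D) ltac:(by rewrite w0) w_edge.
have D_odd : odd D by have := w_parity D (leqnn D); rewrite wD; case: (odd D).
have D_ne1 : D != 1.
  by apply: contra E_c0s0 => /eqP D1; have := w_edge 0; rewrite D1 -D1 w0 wD; apply.
pose h := D./2.
have D_eq : D = (2 * h).+1 by have := odd_double_half D; rewrite D_odd -/h; lia.
pose cw i := if w (2 * i) is inl c then c else c0.
pose sw j := if w (2 * j).+1 is inr s then s else s0.
have w_cw i : i <= h -> w (2 * i) = inl (cw i).
  move=> Hi; have := w_parity (2 * i) ltac:(lia); rewrite /cw oddM andFb.
  by case: (w (2 * i)).
have w_sw j : j <= h -> w (2 * j).+1 = inr (sw j).
  move=> Hj; have := w_parity (2 * j).+1 ltac:(lia); rewrite /sw oddS oddM andFb.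
  by case: (w (2 * j).+1).
exists h, cw, sw; split.
- by move: D_ne1; rewrite D_eq; lia.
- by rewrite /cw muln0 w0.
- by rewrite /sw -D_eq wD.
move=> i j Hi Hj.
have -> : E (cw i) (sw j) = bip_rel E (w (2 * i)) (w (2 * j).+1) by rewrite w_cw ?w_sw.
apply/idP/orP => [e_ij | [/eqP -> | /eqP Hji]].
- have := w_chord (2 * i) (2 * j).+1 ltac:(lia) ltac:(lia) e_ij.
  rewrite bip_rel_sym in e_ij.
  have := w_chord (2 * j).+1 (2 * i) ltac:(lia) ltac:(lia) e_ij.
  by lia.
- by apply: w_edge; lia.
- rewrite bip_rel_sym; have -> : 2 * i = (2 * j).+2 by lia.
  by apply: w_edge; lia.
Qed.

End Bipartite.

Theorem lemma3p3 (C S : finType) (E : C -> S -> bool)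
  (Hconn : bip_connected E) (c0 : C) (s0 : S) (Hinc : ~~ E c0 s0) :
  exists h : nat, 1 <= h <= minn #|C| #|S| - 1 /\
    exists (cs : 'I_h.+1 -> C) (ss : 'I_h.+1 -> S),
      [/\ cs ord0 = c0, ss ord0 = s0,
          (forall i : 'I_h.+1, 0 < i -> E (cs i) (ss i)),
          (exists A, fcfs_matching E cs ss A)
        & (forall A, fcfs_matching E cs ss A -> perfect_matching A)].
Proof.
have [h [cw [sw [h_gt0 cw0 swh E_path]]]] := chordless_path Hconn Hinc.
pose sigma := @ord_pred h.+1.
pose cs (i : 'I_h.+1) := cw i; pose ss (j : 'I_h.+1) := sw (sigma j).
have sigma_bij := ord_pred_bij h.+1.
have E_staircase i j : E (cs i) (ss j) = (sigma j == i :> nat) || ((sigma j).+1 == i).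
  by apply: E_path; rewrite -ltnS.
have card_C := leq_card _ (staircase_customers_inj sigma_bij E_staircase).
have card_S := leq_card _ (staircase_servers_inj sigma_bij E_staircase).
rewrite card_ord in card_C card_S.
exists h; split; first lia.
exists cs, ss; split.
- exact: cw0.
- by rewrite /ss /= modn_small.
- move=> i i_gt0; rewrite E_staircase /= -(prednK i_gt0) addSn /= modnDr.
  by rewrite modn_small ?eqxx ?orbT //; have := ltn_ord i; lia.
- by exists (staircase_matching sigma); apply: staircase_fcfs sigma_bij E_staircase.
- exact: staircase_fcfs_perfect sigma_bij E_staircase.
Qed.
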